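(* Let $f(n,k)={n\brack k}{n+k\brack k}$. For all integers $n,i,k\ge0$, as an identity of polynomials in $q$, \[ f(n,i)\,f(n,k)=\sum_{j\ge0} q^{(n-j)(k+i-j)}\,{i+k\brack i}{j\brack j-i,\,j-k,\,i+k-j}\, f(n,j). \] Consequently (taking $B(k,j,i)=-(k+i-j)j$ and $C(k,j,r,n)=(rk-j)n$), defining $P^{(1)}_{k,k}=1$, $P^{(1)}_{k,j}=0$ for $j\ne k$ and $P^{(r+1)}_{k,j}=\sum_i q^{-(k+i-j)j}{i+k\brack i}{j\brack j-i,\,j-k,\,i+k-j}P^{(r)}_{k,i}$, one has $f(n,k)^r=\sum_j q^{(rk-j)n}f(n,j)P^{(r)}_{k,j}$ for all $n,k\ge0$, $r\ge1$.
   Context: $q$ is an indeterminate; $(q)_0=1$, $(q)_m=(1-q)(1-q^2)\cdots(1-q^m)$. The $q$-binomial ${n\brack k}=\frac{(q)_n}{(q)_k(q)_{n-k}}$ if $0\le k\le n$ and $0$ otherwise. The $q$-multinomial ${m\brack a,b,c}=\frac{(q)_m}{(q)_a(q)_b(q)_c}$ if $a,b,c\ge0$ and $a+b+c=m$, and $0$ otherwise. *)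

(* Everything lives in the field of rational functions Q(q),
   realised as {fraction {poly int}} with q = 'X. *)
From HB Require Import structures.
From mathcomp Require Import all_boot all_order all_algebra.
Set Implicit Arguments. Unset Strict Implicit. Unset Printing Implicit Defensive.
Import Order.TTheory GRing.Theory Num.Theory.
Local Open Scope ring_scope.

Notation RF := {fraction {poly int}}.

Definition q : RF := FracField.tofrac 'X.

Definition qpoch (m : nat) : RF := \prod_(1 <= i < m.+1) (1 - q ^+ i).

Definition qbinom (n k : nat) : RF :=
  if (k <= n)%N then qpoch n / (qpoch k * qpoch (n - k)) else 0.

Definition qmultinom (m : nat) (a b c : int) : RF :=
  if [&& 0 <= a, 0 <= b, 0 <= c & a + b + c == m%:Z]
  then qpoch m / (qpoch `|a|%N * qpoch `|b|%N * qpoch `|c|%N) else 0.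

Definition f (n k : nat) : RF := qbinom n k * qbinom (n + k) k.

(* Paux r k j = P^{(r+1)}_{k,j}. In the recursion the sum over i >= 0 is
   restricted to i <= j: for i > j the multinomial factor vanishes (j - i < 0). *)
Fixpoint Paux (r : nat) (k j : nat) : RF :=
  match r with
  | 0 => (j == k)%:R
  | r'.+1 => \sum_(i < j.+1)
      q ^ (- ((k%:Z + i%:Z - j%:Z) * j%:Z)) * qbinom (i + k) i
        * qmultinom j (j%:Z - i%:Z) (j%:Z - k%:Z) (i%:Z + k%:Z - j%:Z)
        * Paux r' k i
  end.

(* P^{(r)}_{k,j}, meaningful for r >= 1 *)
Definition P (r k j : nat) : RF := Paux r.-1 k j.

From mathcomp Require Import all_boot all_order all_algebra.
From mathcomp Require Import ring zify.
Import Order.TTheory GRing.Theory.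
Local Open Scope ring_scope.

(* Put x = q^n.  The
   recurrence f(n,k+1) (1 - q^(k+1))^2 = f(n,k) (1 - x q^-k) (1 - x q^(k+1))
   multiplies the identity for (i,k) into one for (i,k+1), once every product
   f(n,j) (1 - x q^-k) (1 - x q^(k+1)) is rewritten as
   f(n,j+1) (1 - q^(j+1))^2 + x D(j,k) f(n,j), with
   D(j,k) = q^-j + q^(j+1) - q^-k - q^(k+1).  Comparing the coefficients of
   f(n,j) leaves a three-term recurrence in k for the coefficients, which is a
   rational identity between q-factorials.  For the powers, expand
   f(n,k)^(r+1) = f(n,k)^r f(n,k) with the product formula and exchange the
   sums; the terms with i > j vanish together with the q-multinomial. *)

Lemma q_neq0 : q != 0.
Proof. by rewrite /q tofrac_eq0 polyX_eq0. Qed.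

Lemma expq_neq0 (m : nat) : q ^+ m != 0.
Proof. exact: expf_neq0 q_neq0. Qed.

Lemma expq_natB (m n : nat) : q ^ (m%:Z - n%:Z) = q ^+ m / q ^+ n.
Proof. by rewrite expfzDr ?q_neq0 // -invr_expz. Qed.

Lemma onem_expq_neq0 (m : nat) : (0 < m)%N -> 1 - q ^+ m != 0.
Proof.
move=> m_gt0; rewrite subr_eq0 /q -tofracXn -tofrac1 tofrac_eq.
apply: contraTneq m_gt0 => /(congr1 (fun p : {poly int} => size p)).
by rewrite size_poly1 size_polyXn => -[<-].
Qed.

Lemma qpoch0 : qpoch 0 = 1.
Proof. by rewrite /qpoch big_geq. Qed.

Lemma qpochS m : qpoch m.+1 = qpoch m * (1 - q ^+ m.+1).
Proof. by rewrite /qpoch big_nat_recr. Qed.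

Lemma qpoch_neq0 m : qpoch m != 0.
Proof.
elim: m => [|m IHm]; first by rewrite qpoch0 oner_neq0.
by rewrite qpochS mulf_neq0 ?onem_expq_neq0.
Qed.

(* [1 / (q)_m], extended by [0] to negative [m] as the q-multinomial is. *)
Definition invqpoch (m : int) : RF := if 0 <= m then (qpoch `|m|%N)^-1 else 0.

Lemma invqpoch_lt0 m : m < 0 -> invqpoch m = 0.
Proof. by rewrite /invqpoch ltNge => /negbTE ->. Qed.

Lemma invqpoch0 : invqpoch 0 = 1.
Proof. by rewrite /invqpoch lexx qpoch0 invr1. Qed.

Lemma invqpoch_pred (m n : int) : n = m + 1 -> invqpoch m = invqpoch n * (1 - q ^ n).
Proof.
move=> ->; case: m => [a|[|a]].
- rewrite (_ : Posz a + 1 = a.+1); last lia.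
  by rewrite /invqpoch /= qpochS invfM -mulrA mulVf ?mulr1 ?onem_expq_neq0.
- by rewrite [Negz 0 + 1]/(0 : int) expr0z subrr mulr0 invqpoch_lt0.
- by rewrite !invqpoch_lt0 ?mul0r //; lia.
Qed.

Lemma qmultinomE (j : nat) (a b c : int) : a + b + c = j%:Z ->
  qmultinom j a b c = qpoch j * invqpoch a * invqpoch b * invqpoch c.
Proof.
move=> abc_j; rewrite /qmultinom /invqpoch abc_j eqxx.
by case: (0 <= a); case: (0 <= b); case: (0 <= c); rewrite /= ?mulr0 ?mul0r // !invfM !mulrA.
Qed.

Lemma f_eq0 n j : (n < j)%N -> f n j = 0.
Proof. by move=> lt_nj; rewrite /f /qbinom leqNgt lt_nj mul0r. Qed.

Lemma f_n0 n : f n 0 = 1.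
Proof. by rewrite /f /qbinom !subn0 addn0 qpoch0 mul1r divff ?mulr1 ?qpoch_neq0. Qed.

Lemma f_recS n j : f n j.+1 * (1 - q ^+ j.+1) ^+ 2
  = f n j * ((1 - q ^ (n%:Z - j%:Z)) * (1 - q ^+ (n + j).+1)).
Proof.
case: (ltngtP j n) => [lt_jn|lt_nj|->]; last first.
- by rewrite f_eq0 // subrr expr0z subrr !mul0r mulr0.
- by rewrite !f_eq0 ?mul0r // ltnW.
have -> : n%:Z - j%:Z = (n - j.+1).+1 by lia.
rewrite /f /qbinom lt_jn (ltnW lt_jn) !leq_addl !addnK addnS.
rewrite -[(n - j)%N](subnSK lt_jn) !qpochS -[q ^ _]/(q ^+ (n - j.+1).+1).
(* [field] is run on an abstract field: on [RF] itself it is hopelessly slow. *)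
have frac_id (F : fieldType) (Pn Pj Pd Pnj u v w : F) :
    Pn != 0 -> Pj != 0 -> Pd != 0 -> 1 - u != 0 -> 1 - v != 0 ->
    Pn / (Pj * (1 - u) * Pd) * (Pnj * (1 - w) / (Pj * (1 - u) * Pn)) * (1 - u) ^+ 2
    = Pn / (Pj * (Pd * (1 - v))) * (Pnj / (Pj * Pn)) * ((1 - v) * (1 - w)).
  by move=> *; field; apply/and5P.
apply: (@frac_id _ (qpoch n) (qpoch j) (qpoch (n - j.+1)) (qpoch (n + j)));
  by rewrite ?qpoch_neq0 ?onem_expq_neq0.
Qed.

Definition dq (j k : nat) : RF := (q ^+ j)^-1 + q ^+ j.+1 - (q ^+ k)^-1 - q ^+ k.+1.

Lemma f_mul_factor n j k :
  f n j * ((1 - q ^ (n%:Z - k%:Z)) * (1 - q ^+ (n + k).+1))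
  = f n j.+1 * (1 - q ^+ j.+1) ^+ 2 + q ^+ n * dq j k * f n j.
Proof.
have frac_id (F : fieldType) (x a b z c : F) : a != 0 -> b != 0 ->
    c * ((1 - x / b) * (1 - z * (x * b)))
    = c * ((1 - x / a) * (1 - z * (x * a))) + x * (a^-1 + z * a - b^-1 - z * b) * c.
  by move=> *; field; apply/andP.
rewrite f_recS /dq !expq_natB !exprS !exprD.
by apply: frac_id; rewrite expq_neq0.
Qed.

Definition lincoef (i k j : nat) : RF :=
  qbinom (i + k) i * qmultinom j (j%:Z - i%:Z) (j%:Z - k%:Z) (i%:Z + k%:Z - j%:Z).

Lemma lincoefE i k j : lincoef i k j = qpoch (i + k) / (qpoch i * qpoch k) * qpoch j
   * invqpoch (j%:Z - i%:Z) * invqpoch (j%:Z - k%:Z) * invqpoch (i%:Z + k%:Z - j%:Z).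
Proof. by rewrite /lincoef qmultinomE; [rewrite /qbinom leq_addr addKn; ring | lia]. Qed.

Lemma lincoef_lt i k j : (j < i)%N -> lincoef i k j = 0.
Proof.
by move=> lt_ji; rewrite lincoefE [invqpoch (_ - i%:Z)]invqpoch_lt0 ?mulr0 ?mul0r //; lia.
Qed.

Lemma lincoefS0 i k : lincoef i k.+1 0 = 0.
Proof. by rewrite lincoefE [invqpoch (_ - k.+1%:Z)]invqpoch_lt0 ?mulr0 ?mul0r //; lia. Qed.

Lemma lincoefSS i k j :
  lincoef i k.+1 j.+1 * (1 - q ^+ k.+1) ^+ 2
  = q ^ ((k + i)%N%:Z - j%:Z) * lincoef i k j * (1 - q ^+ j.+1) ^+ 2
    + q ^+ j.+1 * dq j.+1 k * lincoef i k j.+1.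
Proof.
rewrite !lincoefE /dq addnS !qpochS.
rewrite [invqpoch (j.+1%:Z - k.+1%:Z)](@invqpoch_pred _ (j.+1%:Z - k%:Z)); last lia.
rewrite [invqpoch (j%:Z - i%:Z)](@invqpoch_pred _ (j.+1%:Z - i%:Z)); last lia.
rewrite [invqpoch (j%:Z - k%:Z)](@invqpoch_pred _ (j.+1%:Z - k%:Z)); last lia.
rewrite [invqpoch (i%:Z + k%:Z - j.+1%:Z)](@invqpoch_pred _ (i%:Z + k%:Z - j%:Z)); last lia.
have -> : i%:Z + k.+1%:Z - j.+1%:Z = (i + k)%N%:Z - j%:Z by lia.
have -> : i%:Z + k%:Z - j%:Z = (i + k)%N%:Z - j%:Z by lia.
rewrite !expq_natB !expr2 !exprS !exprD.
have frac_id (F : fieldType) (Pik Pi Pk Pj Ri Rk Rm xi xk xj z : F) :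
    Pi != 0 -> Pk != 0 -> 1 - z * xk != 0 -> xi != 0 -> xk != 0 -> xj != 0 -> z != 0 ->
    Pik * (1 - z * (xi * xk)) / (Pi * (Pk * (1 - z * xk))) * (Pj * (1 - z * xj)) * Ri
      * (Rk * (1 - z * xj / xk)) * Rm * ((1 - z * xk) * (1 - z * xk))
    = xk * xi / xj
      * (Pik / (Pi * Pk) * Pj * (Ri * (1 - z * xj / xi)) * (Rk * (1 - z * xj / xk)) * Rm)
      * ((1 - z * xj) * (1 - z * xj))
      + z * xj * ((z * xj)^-1 + z * (z * xj) - xk^-1 - z * xk)
      * (Pik / (Pi * Pk) * (Pj * (1 - z * xj)) * Ri * Rk * (Rm * (1 - xi * xk / xj))).
  by move=> nPi nPk nzxk nxi nxk nxj nz; field; rewrite nPi nPk nzxk nxi nxk nxj nz.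
(* The side goals are closed one by one: letting [rewrite ?q_neq0] try them all
   is extremely slow, as each failed match unfolds the arithmetic of [RF]. *)
apply: frac_id; [exact: qpoch_neq0 | exact: qpoch_neq0 | by rewrite -exprS onem_expq_neq0
  | exact: expq_neq0 | exact: expq_neq0 | exact: expq_neq0 | exact: q_neq0].
Qed.

Definition linterm (n i k j : nat) : RF :=
  q ^ ((n%:Z - j%:Z) * (k%:Z + i%:Z - j%:Z)) * lincoef i k j.

Lemma linterm0 n i j : linterm n i 0 j = (j == i)%:R.
Proof.
rewrite /linterm lincoefE; case: (ltngtP j i) => [lt_ji|lt_ij|->].
- by rewrite [invqpoch (_ - i%:Z)]invqpoch_lt0 ?(mulr0, mul0r) //; lia.
- by rewrite [invqpoch (_ - j%:Z)]invqpoch_lt0 ?mulr0 //; lia.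
have -> : 0%:Z + i%:Z - i%:Z = 0 by lia.
have -> : i%:Z + 0%:Z - i%:Z = 0 by lia.
have -> : i%:Z - 0%:Z = i%:Z by lia.
rewrite mulr0 expr0z invqpoch0 addn0 qpoch0 !mulr1 mul1r /invqpoch /=.
by rewrite mulfV ?mul1r ?mulfV ?qpoch_neq0.
Qed.

Lemma lintermS0 n i k :
  linterm n i k.+1 0 * (1 - q ^+ k.+1) ^+ 2 = linterm n i k 0 * (q ^+ n * dq 0 k).
Proof.
rewrite /linterm lincoefS0 !mulr0 mul0r.
case: k => [|k]; last by rewrite lincoefS0 !mulr0 mul0r.
by rewrite /dq [_ + q ^+ 1]addrC addrK subrr !mulr0.
Qed.

Lemma lintermSS n i k j :
  linterm n i k.+1 j.+1 * (1 - q ^+ k.+1) ^+ 2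
  = linterm n i k j * (1 - q ^+ j.+1) ^+ 2 + linterm n i k j.+1 * (q ^+ n * dq j.+1 k).
Proof.
set e := (n%:Z - j.+1%:Z) * (k.+1%:Z + i%:Z - j.+1%:Z).
have qe0 : q ^ ((n%:Z - j%:Z) * (k%:Z + i%:Z - j%:Z)) = q ^ e * q ^ ((k + i)%N%:Z - j%:Z).
  by rewrite -expfzDr ?q_neq0 //; congr (q ^ _); rewrite /e; lia.
have qe1 : q ^ ((n%:Z - j.+1%:Z) * (k%:Z + i%:Z - j.+1%:Z)) * q ^+ n = q ^ e * q ^+ j.+1.
  by rewrite !exprnP -!expfzDr ?q_neq0 //; congr (q ^ _); rewrite /e; lia.
rewrite /linterm -mulrA lincoefSS qe0 mulrDr; congr (_ + _); first ring.
transitivity (q ^ e * q ^+ j.+1 * dq j.+1 k * lincoef i k j.+1); first ring.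
by rewrite -qe1; ring.
Qed.

Lemma sum_nat_delta (R : pzSemiRingType) (F : nat -> R) n i :
  ((n <= i)%N -> F i = 0) -> \sum_(0 <= j < n) (j == i)%:R * F j = F i.
Proof.
move=> Fi0; under eq_bigr do rewrite mulr_natl mulrb.
by rewrite -big_mkcond big_nat1_eq /=; case: ltnP => // /Fi0.
Qed.

Lemma f_mulE n k i : f n i * f n k = \sum_(0 <= j < n.+1) linterm n i k j * f n j.
Proof.
elim: k i => [|k IHk] i.
  under eq_bigr do rewrite linterm0.
  by rewrite f_n0 mulr1 sum_nat_delta // => /f_eq0.
have sq_neq0 : (1 - q ^+ k.+1) ^+ 2 != 0 by rewrite expf_neq0 ?onem_expq_neq0.
apply: (mulIf sq_neq0).
rewrite -mulrA f_recS mulrA IHk mulr_suml.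
under eq_bigr do rewrite -mulrA f_mul_factor mulrDr.
rewrite big_split /= big_nat_recr //= f_eq0 // mul0r mulr0 addr0.
rewrite [in X in _ + X]big_nat_recl // mulr_suml big_nat_recl //.
rewrite [X in _ = X + _]mulrAC lintermS0.
under [in RHS]eq_bigr do rewrite mulrAC lintermSS mulrDl.
rewrite big_split /= addrCA; congr (_ + (_ + _)); first by rewrite !mulrA.
  by apply: eq_bigr => j _; rewrite mulrA mulrAC.
by apply: eq_bigr => j _; rewrite !mulrA.
Qed.

Lemma sum_linterm_Paux n k r j : (j <= n)%N ->
  \sum_(0 <= i < n.+1) q ^ ((r.+1%:Z * k%:Z - i%:Z) * n%:Z) * Paux r k i * linterm n i k j
  = q ^ ((r.+2%:Z * k%:Z - j%:Z) * n%:Z) * Paux r.+1 k j.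
Proof.
move=> le_jn; rewrite /= mulr_sumr (big_cat_nat _ (n := j.+1)) //=.
rewrite [X in _ + X]big_nat_cond [X in _ + X]big1 ?addr0 => [|i]; last first.
  by case/andP=> /andP[lt_ji _] _; rewrite /linterm lincoef_lt // !mulr0.
rewrite big_mkord; apply: eq_bigr => i _; rewrite /linterm /lincoef.
set a := q ^ ((r.+1%:Z * k%:Z - i%:Z) * n%:Z).
set b := q ^ ((n%:Z - j%:Z) * (k%:Z + i%:Z - j%:Z)).
set c := q ^ ((r.+2%:Z * k%:Z - j%:Z) * n%:Z).
set d := q ^ (- ((k%:Z + i%:Z - j%:Z) * j%:Z)).
have abcd : a * b = c * d by rewrite -!expfzDr ?q_neq0 //; congr (q ^ _); lia.
transitivity (a * b * qbinom (i + k) i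
  * qmultinom j (j%:Z - i%:Z) (j%:Z - k%:Z) (i%:Z + k%:Z - j%:Z) * Paux r k i); first ring.
by rewrite abcd; ring.
Qed.

Lemma f_expE n k r : f n k ^+ r.+1 =
  \sum_(0 <= j < n.+1) q ^ ((r.+1%:Z * k%:Z - j%:Z) * n%:Z) * f n j * Paux r k j.
Proof.
elim: r => [|r IHr].
  under eq_bigr do rewrite /= mulrC.
  rewrite expr1 sum_nat_delta => [|/f_eq0 ->]; last by rewrite mulr0.
  by rewrite (_ : _ * n%:Z = 0) ?expr0z ?mul1r //; lia.
rewrite exprSr IHr mulr_suml.
transitivity (\sum_(0 <= i < n.+1)
    q ^ ((r.+1%:Z * k%:Z - i%:Z) * n%:Z) * Paux r k i * (f n i * f n k)).
  by apply: eq_bigr => i _; ring.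
under eq_bigr do rewrite f_mulE mulr_sumr.
rewrite exchange_big /=; apply: eq_big_nat => j /andP[_ lt_jn].
under eq_bigr do rewrite mulrA.
by rewrite -mulr_suml sum_linterm_Paux // mulrAC.
Qed.

Theorem mainTheorem6 :
  (forall n i k : nat,
     f n i * f n k =
     \sum_(j < n.+1)
       q ^ ((n%:Z - j%:Z) * (k%:Z + i%:Z - j%:Z)) * qbinom (i + k) i
       * qmultinom j (j%:Z - i%:Z) (j%:Z - k%:Z) (i%:Z + k%:Z - j%:Z)
       * f n j)
  /\
  (forall n k r : nat, (1 <= r)%N ->
     f n k ^+ r =
     \sum_(j < n.+1) q ^ ((r%:Z * k%:Z - j%:Z) * n%:Z) * f n j * P r k j).
Proof.
split=> [n i k | n k [|r] // _].
  by rewrite f_mulE big_mkord; apply: eq_bigr => j _; rewrite /linterm /lincoef !mulrA.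
by rewrite f_expE big_mkord.
Qed.
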